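(* Let $\lambda$ be a partition and $L\subset\mathbb R^n$ a full-rank lattice. If the set of flags of subspaces $\{(\mathrm{span}\,\Lambda_i)_i:\Lambda\in\mathscr S_\lambda(L)\}$ determined by the minimal flags of $L$ is a vexillar $2$-design in $\mathscr D_d$, then $L$ is strongly eutactic with respect to $\lambda$; more precisely $\sum_{\Lambda\in\mathscr S_\lambda(L)}\Pi_\Lambda=\frac{|\lambda|\,s_\lambda}{n}\,\mathrm{Id}_{\mathbb R^n}$.
   Context: Let $\lambda$ be a partition whose conjugate partition $\breve\lambda=(\breve\lambda_1\ge\dots\ge\breve\lambda_{\breve s})$ (column lengths) has all parts $<n$; $|\lambda|=\sum_i\breve\lambda_i$. Let $d_1>\dots>d_\ell$ be the distinct values of the $\breve\lambda_i$, $d=(d_1,\dots,d_\ell)$. For a lattice $\Lambda$, $\det\Lambda$ is the determinant of the Gram matrix of a basis. For a full-rank lattice $L\subset\mathbb R^n$, $\gamma(L)=\inf_\Lambda\frac{\det(\Lambda_1)\cdots\det(\Lambda_{\breve s})}{\det(L)^{|\lambda|/n}}$, the infimum over chains of nested sublattices $\Lambda=(\Lambda_1,\dots,\Lambda_{\breve s})$ of $L$ with $\mathrm{rk}\,\Lambda_i=\breve\lambda_i$ (nested meaning $\Lambda_j\subseteq\Lambda_i$ when $\breve\lambda_j\le\breve\lambda_i$). The chains achieving the infimum are the minimal flags; their set $\mathscr S_\lambda(L)$ is finite, of cardinality $s_\lambda$. Each such chain determines a flag of subspaces of shape $d$ (the distinct spans of the $\Lambda_i$). $\Pi_\Lambda=\sum_{i=1}^{\breve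 s}\mathrm{pr}_{\Lambda_i}$, where $\mathrm{pr}_{\Lambda_i}$ is the orthogonal projection onto $\mathrm{span}\,\Lambda_i$. $L$ is eutactic w.r.t. $\lambda$ if $\mathrm{Id}$ is a linear combination with positive coefficients of the $\Pi_\Lambda$, $\Lambda\in\mathscr S_\lambda(L)$, and strongly eutactic if this holds with all coefficients equal. Flag variety and designs: $\mathscr D_d$ is the variety of flags $\{0\}\subsetneq V_\ell\subsetneq\dots\subsetneq V_1\subsetneq\mathbb R^n$, $\dim V_i=d_i$, with $\mathbf O(n)$-invariant probability measure; with $m=d_1$, a flag is represented by $X_\Delta\in M_{n\times m}(\mathbb R)$ with orthonormal columns, the first $d_i$ spanning $V_i$, unique up to right multiplication by the block diagonal group $\mathbf O(d_\ell)\times\mathbf O(d_{\ell-1}-d_\ell)\times\dots\times\mathbf O(d_1-d_2)$; polynomial functions of degree $\le t$ on $\mathscr D_d$ are $\Delta\mapsto P(X_\Delta)$ for $P$ a polynomial of degree $\le t$ in the matrix entries invariant under that group. A vexillar $t$-design is a finite set $\mathcal D\subset\mathscr D_d$ with $\int_{\mathscr D_d}f=\frac1{|\mathcal D|}\sum_{\Delta\in\mathcal D}f(\Delta)$ for all such $f$. *)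

From HB Require Import structures.
From mathcomp Require Import all_boot all_order all_algebra.
Set Implicit Arguments. Unset Strict Implicit. Unset Printing Implicit Defensive.
Import Order.TTheory GRing.Theory Num.Theory.
Local Open Scope ring_scope.

Definition is_partition (lam : seq nat) : bool :=
  sorted geq lam && all (fun p => 0 < p)%N lam.

(* conjugate partition: column lengths; column i has #{parts > i} cells *)
Definition conjp (lam : seq nat) : seq nat :=
  [seq count (fun p => i < p)%N lam | i <- iota 0 (head 0%N lam)].

Definition psize (lam : seq nat) : nat := sumn lam.

Section Lat.
Variable R : realFieldType.
Variable n : nat.

Definition in_Zspan k (M : 'M[R]_(k, n)) (v : 'rV[R]_n) : Prop :=
  exists c : 'I_k -> int, v = \sum_(j < k) (c j)%:~R *: row j M.

(* the full-rank lattice L with basis the rows of B (B invertible) *)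
Definition in_lattice (B : 'M[R]_n) (v : 'rV[R]_n) : Prop := in_Zspan B v.

Definition zsub k k' (M : 'M[R]_(k, n)) (M' : 'M[R]_(k', n)) : Prop :=
  forall j : 'I_k, in_Zspan M' (row j M).

Definition sublattice (B : 'M[R]_n) k (M : 'M[R]_(k, n)) : Prop :=
  row_free M /\ forall j : 'I_k, in_lattice B (row j M).

(* det of a lattice: Gram determinant of a basis *)
Definition latdet k (M : 'M[R]_(k, n)) : R := \det (M *m M^T).

(* orthogonal projection (on column vectors) onto span of rows of M *)
Definition proj k (M : 'M[R]_(k, n)) : 'M[R]_n := M^T *m invmx (M *m M^T) *m M.

Definition chain (lc : seq nat) := forall i : 'I_(size lc), 'M[R]_(nth 0%N lc i, n).

Definition is_chain (B : 'M[R]_n) (lc : seq nat) (C : chain lc) : Prop :=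
  (forall i, sublattice B (C i)) /\
  (forall i j : 'I_(size lc), (nth 0%N lc j <= nth 0%N lc i)%N -> zsub (C j) (C i)).

Definition chain_val (lc : seq nat) (C : chain lc) : R := \prod_i latdet (C i).

(* minimal flags: chains achieving the infimum of gamma; the (positive, constant)
   denominator det(L)^{|lambda|/n} does not affect which chains are minimal *)
Definition minimal_chain (B : 'M[R]_n) lc (C : chain lc) : Prop :=
  is_chain B C /\ forall C' : chain lc, is_chain B C' -> chain_val C <= chain_val C'.

Definition chain_eq lc (C C' : chain lc) : Prop :=
  forall i, zsub (C i) (C' i) /\ zsub (C' i) (C i).

Definition enum_minimal (B : 'M[R]_n) lc (S : seq (chain lc)) : Prop :=
  (forall k : nat, (k < size S)%N -> forall C0, minimal_chain B (nth C0 S k)) /\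
  (forall C, minimal_chain B C -> exists2 k, (k < size S)%N & forall C0, chain_eq C (nth C0 S k)) /\
  (forall k l : nat, (k < size S)%N -> (l < size S)%N -> forall C0,
       chain_eq (nth C0 S k) (nth C0 S l) -> k = l).

Definition PiL lc (C : chain lc) : 'M[R]_n := \sum_i proj (C i).

(* flags are represented by n x m matrices X with orthonormal columns *)
Definition orthonormal_cols m (X : 'M[R]_(n, m)) : bool := X^T *m X == 1%:M.

(* matrix whose row space is the span of the first k columns of X *)
Definition flag_sp m (k : nat) (X : 'M[R]_(n, m)) : 'M[R]_(m, n) :=
  \matrix_(j < m, r < n) (if (j < k)%N then X r j else 0).

(* X and Y represent the same flag of shape d (d = distinct values of lc) *)
Definition flag_eq (lc : seq nat) m (X Y : 'M[R]_(n, m)) : bool :=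
  all (fun k => (flag_sp k X == flag_sp k Y)%MS) lc.

Definition flag_of (lc : seq nat) m (X : 'M[R]_(n, m)) (C : chain lc) : bool :=
  [forall i : 'I_(size lc), (flag_sp (nth 0%N lc i) X == C i)%MS].

Definition enum_flags lc m (S : seq (chain lc)) (D : seq 'M[R]_(n, m)) : Prop :=
  (forall X, X \in D -> orthonormal_cols X) /\
  (forall k l : nat, (k < size D)%N -> (l < size D)%N ->
       flag_eq lc (nth 0 D k) (nth 0 D l) -> k = l) /\
  (forall X, X \in D -> exists2 k, (k < size S)%N & forall C0, flag_of X (nth C0 S k)) /\
  (forall k : nat, (k < size S)%N -> forall C0, exists2 X, X \in D & flag_of X (nth C0 S k)).

Definition poly2 m (c : R) (a : 'cV[R]_(n * m)) (Q : 'M[R]_(n * m)) (X : 'M[R]_(n, m)) : R :=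
  c + (mxvec X *m a) 0 0 + (mxvec X *m Q *m (mxvec X)^T) 0 0.

Definition is_poly2 m (F : 'M[R]_(n, m) -> R) : Prop :=
  exists c a Q, forall X, F X = @poly2 m c a Q X.

(* the block diagonal group O(d_l) x O(d_{l-1}-d_l) x ... x O(d_1-d_2) in O(m) *)
Definition in_block_group (lc : seq nat) m (h : 'M[R]_m) : Prop :=
  h^T *m h = 1%:M /\
  forall j k : 'I_m, h j k != 0 -> all (fun d => (j < d)%N == (k < d)%N) lc.

Definition flag_poly2 (lc : seq nat) m (F : 'M[R]_(n, m) -> R) : Prop :=
  is_poly2 F /\ forall h X, in_block_group lc h -> F (X *m h) = F X.

(* I is the integral against the O(n)-invariant probability measure on the flag
   variety, restricted to polynomial functions of degree <= 2: a normalized, positive,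
   O(n)-invariant linear functional on the functions Delta |-> F(X_Delta). *)
Definition flag_integral2 (lc : seq nat) m (I : ('M[R]_(n, m) -> R) -> R) : Prop :=
  [/\ (forall F G a, flag_poly2 lc F -> flag_poly2 lc G ->
         I (fun X => a * F X + G X) = a * I F + I G),
      I (fun _ => 1) = 1,
      (forall F G, flag_poly2 lc F -> flag_poly2 lc G ->
         (forall X, orthonormal_cols X -> F X = G X) -> I F = I G),
      (forall F, flag_poly2 lc F -> (forall X, orthonormal_cols X -> 0 <= F X) -> 0 <= I F) &
      (forall F (g : 'M[R]_n), flag_poly2 lc F -> g^T *m g = 1%:M ->
         I (fun X => F (g *m X)) = I F)].

Definition vexillar_2design (lc : seq nat) m (D : seq 'M[R]_(n, m)) : Prop :=
  exists I, flag_integral2 lc I /\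
    forall F, flag_poly2 lc F -> I F = (\sum_(X <- D) F X) / (size D)%:R.

End Lat.

From HB Require Import structures.
From mathcomp Require Import all_boot all_order all_algebra perm.
From mathcomp Require Import ring lra zify.
Import Order.TTheory GRing.Theory Num.Theory.
Local Open Scope ring_scope.
Set Implicit Arguments. Unset Strict Implicit. Unset Printing Implicit Defensive.

(* A minimal chain is determined by the flag of subspaces it spans: if two minimal
   chains span the same flag, their lattice sum is a chain whose Gram determinants are
   at most theirs, so minimality forces the three chains to coincide.  Hence minimal
   chains and flags of the design correspond bijectively, and Pi_Lambda is the sum,
   over the columns of lambda, of the orthogonal projections onto the subspaces of the
   corresponding flag.  The entries of the projection onto the k-dimensional subspace
   are polynomials of degree 2 on the flag variety, so for a 2-design their average
   over the design is the O(n)-invariant integral; an O(n)-invariant matrix is scalar,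
   and its trace is k.  Summing k over the columns of lambda gives |lambda|. *)

Section GramDeterminant.
Variable R : realFieldType.

Lemma mulmx_trmx_ge0 n (v : 'rV[R]_n) : 0 <= (v *m v^T) 0 0.
Proof. by rewrite mxE; apply: sumr_ge0 => j _; rewrite mxE -expr2 sqr_ge0. Qed.

Lemma mulmx_trmx_gt0 n (v : 'rV[R]_n) : v != 0 -> 0 < (v *m v^T) 0 0.
Proof.
move=> v_neq0; rewrite lt_def mulmx_trmx_ge0 andbT; apply: contra v_neq0 => /eqP.
have sq_ge0 (i : 'I_n) : true -> 0 <= v 0 i * v^T i 0 by rewrite mxE -expr2 sqr_ge0.
rewrite mxE => /(psumr_eq0P sq_ge0) v0; apply/eqP/rowP => j.
by have /eqP := v0 j isT; rewrite !mxE mulf_eq0 orbb => /eqP.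
Qed.

Lemma det_schur1 k (a : R) (C : 'M[R]_(k, 1)) (D : 'M[R]_k) : a != 0 ->
  \det (block_mx a%:M C^T C D) = a * \det (D - a^-1 *: (C *m C^T)).
Proof.
move=> a_neq0.
have elim_col : block_mx 1 0 (- a^-1 *: C) 1 *m block_mx a%:M C^T C D
    = block_mx a%:M C^T 0 (D - a^-1 *: (C *m C^T)).
  rewrite mulmx_block !mul1mx !mul0mx !addr0 -!scalemxAl mul_mx_scalar scalerA.
  by rewrite mulNr mulVf // scaleN1r addNr scaleNr addrC.
have := congr1 determinant elim_col; rewrite det_mulmx det_lblock !det1 !mul1r.
by rewrite det_ublock det_mx11 mxE eqxx mulr1n.
Qed.

Lemma schur1_form k (a : R) (C : 'M[R]_(k, 1)) (D : 'M[R]_k) (y : 'rV[R]_k) :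
  a != 0 -> let u := - a^-1 *: (y *m C) in
  row_mx u y *m block_mx a%:M C^T C D *m (row_mx u y)^T
    = y *m (D - a^-1 *: (C *m C^T)) *m y^T.
Proof.
move=> a_neq0 u; rewrite mul_row_block tr_row_mx mul_row_col !mulmxDl /u.
set w := y *m C; have wT : w^T = C^T *m y^T by rewrite trmx_mul.
rewrite mul_mx_scalar !linearZ /= -!scalemxAl -(mulmxA w) -wT mulmxDr mulmxDl.
rewrite -scalemxAr -scalemxAl mulmxN mulNmx !mulmxA -/w -(mulmxA w) -wT !scalerA.
by apply/matrixP => i j; rewrite !mxE; field.
Qed.

Lemma quad_form_delta n (M : 'M[R]_n) i :
  (delta_mx (0 : 'I_1) i *m M *m (delta_mx (0 : 'I_1) i)^T) 0 0 = M i i.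
Proof. by rewrite -rowE trmx_delta -colE !mxE. Qed.

Lemma posdef_det_gt0 k (M : 'M[R]_k) : M^T = M ->
  (forall x : 'rV[R]_k, x != 0 -> 0 < (x *m M *m x^T) 0 0) -> 0 < \det M.
Proof.
elim: k M => [M _ _|k IHk]; first by rewrite det_mx00.
rewrite -[k.+1]/(1 + k)%N => M M_sym M_pos.
set C := dlsubmx M; set D := drsubmx M; set a := ulsubmx M 0 0.
have eM : M = block_mx a%:M C^T C D.
  rewrite -{1}(submxK M) -mx11_scalar; congr block_mx.
  by rewrite trmx_dlsub M_sym.
have a_gt0 : 0 < a.
  rewrite /a !mxE -(quad_form_delta M) M_pos //; apply/eqP => /matrixP/(_ 0 (lshift k 0)).
  by rewrite !mxE !eqxx /= => /eqP; rewrite oner_eq0.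
have a_neq0 : a != 0 by rewrite gt_eqF.
rewrite eM det_schur1 // mulr_gt0 // IHk //.
  by rewrite linearB /= linearZ /= trmx_mul trmxK trmx_drsub M_sym.
move=> y y_neq0; rewrite -schur1_form // -eM M_pos //.
by apply: contra y_neq0 => /eqP/(congr1 rsubmx); rewrite row_mxKr linear0 => ->.
Qed.

Lemma gram_det_gt0 k n (A : 'M[R]_(k, n)) : row_free A -> 0 < \det (A *m A^T).
Proof.
move=> A_free; apply: posdef_det_gt0; first by rewrite trmx_mul trmxK.
move=> x x_neq0; rewrite !mulmxA -(mulmxA (x *m A)) -trmx_mul.
by apply: mulmx_trmx_gt0; rewrite mulmx_free_eq0.
Qed.

Lemma gram_unitmx k n (A : 'M[R]_(k, n)) : row_free A -> A *m A^T \in unitmx.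
Proof. by move=> A_free; rewrite unitmxE unitfE gt_eqF // gram_det_gt0. Qed.

End GramDeterminant.

Lemma sum_ord_ltn h x : (x <= h)%N -> (\sum_(i < h) (i < x)%N)%N = x.
Proof.
move=> x_le_h; rewrite -(big_mkord xpredT (fun i => nat_of_bool (i < x)%N)).
rewrite (@big_cat_nat _ _ _ x 0 h _ _ (leq0n x) x_le_h) /=.
rewrite (@eq_big_nat _ _ _ 0 x _ (fun=> 1%N)) => [|i /andP[_ ->]] //.
rewrite (@eq_big_nat _ _ _ x h _ (fun=> 0%N)) => [|i /andP[x_le_i _]]; last first.
  by rewrite ltnNge x_le_i.
by rewrite !sum_nat_const_nat muln1 muln0 subn0 addn0.
Qed.

Section OrthonormalFlags.
Variables (R : realFieldType) (n m : nat).
Implicit Types (X : 'M[R]_(n, m)) (g : 'M[R]_n).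

Definition flag_proj (kk : nat) X : 'M[R]_n := (flag_sp kk X)^T *m flag_sp kk X.

Lemma flag_sp_mul_tr kk X : orthonormal_cols X ->
  flag_sp kk X *m (flag_sp kk X)^T = \matrix_(j, l) ((j == l) && (j < kk)%N)%:R.
Proof.
move=> /eqP X_orth; apply/matrixP => j l; rewrite !mxE.
have := congr1 (fun M : 'M[R]_m => M j l) X_orth; rewrite !mxE => XtX_jl.
case: (ltnP j kk) => hj; case: (ltnP l kk) => hl; rewrite ?andbT ?andbF /=.
- by rewrite -XtX_jl; apply: eq_bigr => r _; rewrite !mxE hj hl.
- rewrite big1 => [|r _]; last by rewrite !mxE hj ltnNge hl /= mulr0.
  by case: eqP => // ejl; rewrite ejl ltnNge hl in hj.
- by rewrite big1 // => r _; rewrite !mxE ltnNge hj /= mul0r.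
- by rewrite big1 // => r _; rewrite !mxE ltnNge hj /= mul0r.
Qed.

Lemma flag_sp_idem kk X : orthonormal_cols X ->
  flag_sp kk X *m (flag_sp kk X)^T *m flag_sp kk X = flag_sp kk X.
Proof.
move=> X_orth; rewrite flag_sp_mul_tr //; apply/matrixP => j r; rewrite !mxE.
rewrite (bigD1 j) //= big1 ?addr0 => [|l /negPf l_neq_j]; last first.
  by rewrite !mxE eq_sym l_neq_j mul0r.
by rewrite !mxE eqxx /=; case: (ltnP j kk); rewrite ?mul1r ?mul0r.
Qed.

Lemma proj_flag_sp kk k X (A : 'M[R]_(k, n)) :
  orthonormal_cols X -> row_free A -> (flag_sp kk X == A)%MS -> proj A = flag_proj kk X.
Proof.
move=> X_orth A_free /andP[/submxP[W' eF] /submxP[W eA]].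
rewrite /flag_proj; set F := flag_sp kk X in eF eA *.
have projFt : proj A *m F^T = F^T.
  rewrite /proj eF trmx_mul -!mulmxA (mulmxA A) (mulmxA (invmx _)).
  by rewrite mulVmx ?mul1mx // gram_unitmx.
have AFtF : A *m F^T *m F = A by rewrite [in LHS]eA -!(mulmxA W) flag_sp_idem // -eA.
by rewrite -projFt /proj -!mulmxA (mulmxA A) AFtF.
Qed.

Lemma flag_sp_mull kk X g : flag_sp kk (g *m X) = flag_sp kk X *m g^T.
Proof.
apply/matrixP => j r; rewrite !mxE; case: ifP => j_lt.
  by apply: eq_bigr => l _; rewrite !mxE j_lt mulrC.
by rewrite big1 // => l _; rewrite !mxE j_lt mul0r.
Qed.

Lemma flag_proj_mull kk X g : flag_proj kk (g *m X) = g *m flag_proj kk X *m g^T.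
Proof. by rewrite /flag_proj flag_sp_mull trmx_mul trmxK !mulmxA. Qed.

Lemma flag_sp_mulr_block lc kk X (h : 'M[R]_m) :
  in_block_group lc h -> kk \in lc -> flag_sp kk (X *m h) = h^T *m flag_sp kk X.
Proof.
move=> [_ h_block] kk_lc; apply/matrixP => j r; rewrite !mxE.
have same_block (l : 'I_m) : h l j != 0 -> (l < kk)%N = (j < kk)%N.
  by move=> /h_block/allP/(_ kk kk_lc)/eqP.
case: ifP => j_lt; [apply: eq_bigr | rewrite big1 //] => l _; rewrite !mxE;
  case: (eqVneq (h l j) 0) => [->|/same_block ->]; rewrite ?j_lt ?mulr0 ?mul0r //.
by rewrite mulrC.
Qed.

Lemma flag_proj_mulr_block lc kk X (h : 'M[R]_m) :
  in_block_group lc h -> kk \in lc -> flag_proj kk (X *m h) = flag_proj kk X.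
Proof.
move=> h_block kk_lc; rewrite /flag_proj (flag_sp_mulr_block X h_block kk_lc).
have hhT : h *m h^T = 1%:M by apply: mulmx1C; case: h_block.
by rewrite trmx_mul trmxK -mulmxA (mulmxA h) hhT mul1mx.
Qed.

Lemma mxtrace_flag_proj kk X : orthonormal_cols X -> (kk <= m)%N ->
  \tr (flag_proj kk X) = kk%:R.
Proof.
move=> X_orth kk_le_m; rewrite /flag_proj mxtrace_mulC flag_sp_mul_tr //.
rewrite /mxtrace (eq_bigr (fun j : 'I_m => (j < kk)%N%:R)) => [|j _]; last first.
  by rewrite mxE eqxx.
by rewrite -natr_sum sum_ord_ltn.
Qed.

End OrthonormalFlags.

Section Quadratic.
Variables (R : realFieldType) (n m : nat).
Implicit Types (F G : 'M[R]_(n, m) -> R).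

Lemma is_poly2_ext F G : F =1 G -> is_poly2 F -> is_poly2 G.
Proof. by move=> eFG [c [a [Q FE]]]; exists c, a, Q => X; rewrite -eFG FE. Qed.

Lemma is_poly2_const (c : R) : is_poly2 (fun _ : 'M[R]_(n, m) => c).
Proof. by exists c, 0, 0 => X; rewrite /poly2 !mulmx0 mul0mx !mxE !addr0. Qed.

Lemma is_poly2D F G : is_poly2 F -> is_poly2 G -> is_poly2 (F \+ G).
Proof.
move=> [c1 [a1 [Q1 FE]]] [c2 [a2 [Q2 GE]]].
exists (c1 + c2), (a1 + a2), (Q1 + Q2) => X; rewrite /= FE GE /poly2.
by rewrite !mulmxDr !mulmxDl !mxE; ring.
Qed.

Lemma is_poly2Z (k : R) F : is_poly2 F -> is_poly2 (fun X => k * F X).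
Proof.
move=> [c [a [Q FE]]]; exists (k * c), (k *: a), (k *: Q) => X; rewrite FE /poly2.
by rewrite -!scalemxAr -scalemxAl !mxE; ring.
Qed.

Lemma is_poly2_sum (I : Type) (r : seq I) (F : I -> 'M[R]_(n, m) -> R) :
  (forall i, is_poly2 (F i)) -> is_poly2 (fun X => \sum_(i <- r) F i X).
Proof.
move=> F_poly2; elim: r => [|i r IHr].
  by apply: is_poly2_ext (is_poly2_const 0) => X; rewrite big_nil.
by apply: is_poly2_ext (is_poly2D (F_poly2 i) IHr) => X; rewrite big_cons.
Qed.

Lemma is_poly2_entryM a j b l : is_poly2 (fun X : 'M[R]_(n, m) => X a j * X b l).
Proof.
exists 0, 0, (delta_mx (mxvec_index a j) (mxvec_index b l)) => X.
rewrite /poly2 mulmx0 mxE !add0r -(mul_delta_mx (0 : 'I_1)) mulmxA -colE.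
by rewrite (mx11_scalar (col _ _)) mul_scalar_mx -scalemxAl -rowE !mxE !mxvecE.
Qed.

Lemma is_poly2_flag_proj kk (g : 'M[R]_n) a b :
  is_poly2 (fun X : 'M[R]_(n, m) => flag_proj kk (g *m X) a b).
Proof.
pose entry (X : 'M[R]_(n, m)) c d := \sum_(j < m) (j < kk)%N%:R * (X c j * X d j).
suff: is_poly2 (fun X => \sum_d \sum_c (g a c * g b d) * entry X c d).
  apply: is_poly2_ext => X; rewrite flag_proj_mull mxE; apply: eq_bigr => d _.
  rewrite !mxE mulr_suml.
  apply: eq_bigr => c _; rewrite [RHS]mulrAC /entry /flag_proj mxE; congr (_ * _).
  by apply: eq_bigr => j _; rewrite !mxE; case: ifP; rewrite ?mul1r ?mul0r.
do 2![apply: is_poly2_sum => ?]; apply: is_poly2Z.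
by apply: is_poly2_sum => j; apply: is_poly2Z; apply: is_poly2_entryM.
Qed.

Lemma flag_poly2_ext lc F G : F =1 G -> flag_poly2 lc F -> flag_poly2 lc G.
Proof.
move=> eFG [F_poly2 F_inv]; split=> [|h X h_block]; first exact: is_poly2_ext F_poly2.
by rewrite -!eFG F_inv.
Qed.

Lemma flag_poly2_flag_proj lc kk (g : 'M[R]_n) a b : kk \in lc ->
  flag_poly2 lc (fun X : 'M[R]_(n, m) => flag_proj kk (g *m X) a b).
Proof.
move=> kk_lc; split=> [|h X h_block]; first exact: is_poly2_flag_proj.
by rewrite mulmxA (flag_proj_mulr_block _ h_block kk_lc).
Qed.

End Quadratic.

Lemma orthogonal_invariant_scalar (R : realFieldType) n (N : 'M[R]_n) : (0 < n)%N ->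
  (forall g : 'M[R]_n, g^T *m g = 1%:M -> g *m N *m g^T = N) ->
  N = (\tr N / n%:R) *: 1%:M.
Proof.
move=> n_gt0 N_inv.
have offdiag0 (a b : 'I_n) : a != b -> N a b = 0.
  move=> a_neq_b; pose s : 'rV[R]_n := \row_j (if j == a then -1 else 1).
  have s_orth : (diag_mx s)^T *m diag_mx s = 1%:M.
    rewrite tr_diag_mx mulmx_diag; apply/matrixP => i j; rewrite !mxE.
    by case: (i == a); case: (i == j); rewrite ?mulrNN ?mul1r ?mulr1n ?mulr0n.
  have := congr1 (fun M : 'M[R]_n => M a b) (N_inv _ s_orth).
  rewrite tr_diag_mx mul_diag_mx mul_mx_diag !mxE eqxx eq_sym (negPf a_neq_b).
  by rewrite mulr1 mulN1r => ?; lra.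
have diag_const (a b : 'I_n) : N a a = N b b.
  have t_orth : (perm_mx (tperm a b))^T *m perm_mx (tperm a b) = 1%:M :> 'M[R]_n.
    by rewrite tr_perm_mx -perm_mxM mulVg perm_mx1.
  have := congr1 (fun M : 'M[R]_n => M a a) (N_inv _ t_orth).
  by rewrite -row_permE tr_perm_mx -col_permE !mxE tpermL => <-.
pose i0 := Ordinal n_gt0.
have -> : \tr N = n%:R * N i0 i0.
  rewrite /mxtrace (eq_bigr (fun=> N i0 i0)) => [|i _]; last exact: diag_const.
  by rewrite sumr_const card_ord mulr_natl.
rewrite mulrAC divff ?mul1r ?pnatr_eq0 -?lt0n //.
apply/matrixP => i j; rewrite !mxE; case: eqP => [<-|/eqP i_neq_j].
  by rewrite mulr1 (diag_const i i0).
by rewrite mulr0 offdiag0.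
Qed.

Lemma design_sum_flag_proj (R : realFieldType) n m lc (D : seq 'M[R]_(n, m)) kk :
  (0 < n)%N -> vexillar_2design lc D -> kk \in lc -> (kk <= m)%N ->
  (forall X, X \in D -> orthonormal_cols X) ->
  \sum_(X <- D) flag_proj kk X = ((kk * size D)%:R / n%:R) *: 1%:M.
Proof.
move=> n_gt0 [I [[_ I1 _ _ I_inv] I_avg]] kk_lc kk_le_m D_orth.
have size_neq0 : (size D)%:R != 0 :> R.
  have one_poly2 : flag_poly2 lc (fun _ : 'M[R]_(n, m) => 1).
    by split=> //; exact: is_poly2_const.
  rewrite pnatr_eq0; apply/negP => /nilP D_nil; move: (I_avg _ one_poly2).
  by rewrite I1 D_nil big_nil mul0r => /eqP; rewrite oner_eq0.
have entry_poly2 (g : 'M[R]_n) a b :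
    flag_poly2 lc (fun X : 'M[R]_(n, m) => flag_proj kk (g *m X) a b).
  exact: flag_poly2_flag_proj.
have entry1_poly2 a b : flag_poly2 lc (fun X : 'M[R]_(n, m) => flag_proj kk X a b).
  by apply: flag_poly2_ext (entry_poly2 1%:M a b) => X; rewrite mul1mx.
set N := \sum_(X <- D) flag_proj kk X.
have N_inv (g : 'M[R]_n) : g^T *m g = 1%:M -> g *m N *m g^T = N.
  move=> g_orth; apply/matrixP => a b.
  have := I_inv _ g (entry1_poly2 a b) g_orth.
  rewrite (I_avg _ (entry1_poly2 a b)) (I_avg _ (entry_poly2 g a b)).
  move/(congr1 ( *%R^~ (size D)%:R)); rewrite !divfK // => avg_g.
  rewrite /N mulmx_sumr mulmx_suml !summxE -avg_g.
  by apply: eq_bigr => X _; rewrite flag_proj_mull.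
have trN : \tr N = (kk * size D)%:R.
  rewrite /N raddf_sum /= big_seq (eq_bigr (fun=> kk%:R)) => [|X XD]; last first.
    by rewrite mxtrace_flag_proj // D_orth.
  by rewrite -big_seq big_const_seq count_predT iter_addr addr0 natrM mulr_natr.
by rewrite {1}(orthogonal_invariant_scalar n_gt0 N_inv) trN.
Qed.

Lemma smith_diag_pid n1 n2 (d : seq int) : sorted dvdz d ->
  exists r (e : 'rV[int]_n2), \det (diag_mx e) != 0 /\
    \matrix_(i < n1, j < n2) (d`_i *+ (i == j :> nat)) = pid_mx r *m diag_mx e.
Proof.
move=> d_sorted; pose r := find (eq_op^~ 0) d.
have d_neq0 i : (i < r)%N -> d`_i != 0 by move/(before_find 0) => /= ->.
have d_eq0 i : (r <= i)%N -> d`_i = 0.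
  move=> r_le_i; case: (ltnP i (size d)) => [i_lt|]; last exact: nth_default.
  have r_lt : (r < size d)%N := leq_ltn_trans r_le_i i_lt.
  have /eqP dr0 : d`_r == 0.
    by have := @nth_find _ 0 (eq_op^~ 0) d; rewrite has_find; apply.
  have dvdz_transitive : transitive dvdz by move=> ? ? ?; apply: dvdz_trans.
  have : (d`_r %| d`_i)%Z.
    exact: (sorted_leq_nth dvdz_transitive dvdzz 0 d_sorted) r i r_lt i_lt r_le_i.
  by rewrite dr0 dvd0z => /eqP.
exists r, (\row_j (if (j < r)%N then d`_j else 1)); split.
  rewrite det_diag; apply/prodf_neq0 => j _; rewrite mxE.
  by case: ifP => [/d_neq0|]; rewrite ?oner_neq0.
apply/matrixP => i j; rewrite mul_mx_diag !mxE.
case: (eqVneq (i : nat) j) => [<-|]; last by rewrite mulr0n mul0r.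
by case: ltnP => i_r; rewrite mulr1n ?mul1r ?mul0r // d_eq0.
Qed.

Lemma pid_mx_rank_col (R : fieldType) k l n r :
  \rank (pid_mx r : 'M[R]_(k + l, n)) = k ->
  forall T : nzRingType, pid_mx r = col_mx (pid_mx k) 0 :> 'M[T]_(k + l, n).
Proof.
rewrite -pid_mx_minh -pid_mx_minv rank_pid_mx ?geq_minl //; last first.
  by rewrite geq_min geq_minl orbT.
move=> min_k T; rewrite -pid_mx_minh -pid_mx_minv min_k.
apply/matrixP => i j.
case: (split_ordP i) => i' ->; rewrite ?col_mxEu ?col_mxEd !mxE //=.
rewrite (_ : (_ == _) && _ = false) //; apply/negP => /andP[_]; lia.
Qed.

Section IntegralLattices.
Variable R : realFieldType.
Local Notation imx N := (map_mx (fun z : int => z%:~R : R) N).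

Lemma int_mx_col_basis k l n (N : 'M[int]_(k + l, n)) : \rank (imx N) = k ->
  exists2 P : 'M[int]_(k + l), P \in unitmx &
    exists2 U : 'M[int]_(k, n), N = P *m col_mx U 0 & row_free (imx U).
Proof.
have [P P_unit [Q Q_unit [d d_sorted eN]]] := int_Smith_normal_form N.
have [r [e [e_det eD]]] := smith_diag_pid (k + l) n d_sorted.
pose W := diag_mx e *m Q.
have W_unit : imx W \in unitmx.
  rewrite unitmxE det_map_mx unitfE intr_eq0 det_mulmx mulf_neq0 //.
  by apply: contraTneq Q_unit => Q0; rewrite unitmxE Q0 unitr0.
have P_unitR : imx P \in unitmx by rewrite unitmxE det_map_mx rmorph_unit // -unitmxE.
have eNW : N = P *m pid_mx r *m W by rewrite eN eD /W !mulmxA.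
move=> rankN; have rank_pid : \rank (pid_mx r : 'M[R]_(k + l, n)) = k.
  apply: etrans _ rankN.
  rewrite eNW map_mxM mxrankMfree ?row_free_unit // map_mxM map_pid_mx.
  have P_full : row_full (imx P) by rewrite row_full_unit.
  by rewrite (eqmxMfull _ P_full).
exists P => //; exists (pid_mx k *m W).
  by rewrite eNW (pid_mx_rank_col rank_pid) -mulmxA mul_col_mx mul0mx.
have k_le_n : (k <= n)%N by rewrite -rank_pid rank_leq_col.
by rewrite /row_free map_mxM map_pid_mx mxrankMfree ?row_free_unit ?rank_pid_mx.
Qed.

Lemma in_ZspanP n k (M : 'M[R]_(k, n)) v :
  in_Zspan M v <-> exists c : 'rV[int]_k, v = imx c *m M.
Proof.
split=> [[c ->]|[c ->]]; [exists (\row_j c j) | exists (c 0)];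
  by rewrite mulmx_sum_row; apply: eq_bigr => j _; rewrite !mxE.
Qed.

Lemma zsubP n k k' (M : 'M[R]_(k, n)) (M' : 'M[R]_(k', n)) :
  zsub M M' <-> exists T : 'M[int]_(k, k'), M = imx T *m M'.
Proof.
split=> [M_sub|[T ->] j]; last first.
  by apply/in_ZspanP; exists (row j T); rewrite row_mul -map_row.
have /fin_all_exists[c Mc] j : exists c, row j M = imx c *m M' by apply/in_ZspanP.
exists (\matrix_j c j); apply/row_matrixP => j.
by rewrite row_mul Mc -map_row rowK.
Qed.

Lemma zsub_trans n k1 k2 k3
    (M1 : 'M[R]_(k1, n)) (M2 : 'M[R]_(k2, n)) (M3 : 'M[R]_(k3, n)) :
  zsub M1 M2 -> zsub M2 M3 -> zsub M1 M3.
Proof.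
move=> /zsubP[T1 ->] /zsubP[T2 ->]; apply/zsubP; exists (T1 *m T2).
by rewrite map_mxM mulmxA.
Qed.

Lemma latdet_mull n k (T : 'M[R]_k) (A : 'M[R]_(k, n)) :
  latdet (T *m A) = \det T ^+ 2 * latdet A.
Proof. by rewrite /latdet trmx_mul !mulmxA -(mulmxA T) !det_mulmx det_tr; ring. Qed.

Lemma latdet_zsub n k (A A' : 'M[R]_(k, n)) :
  row_free A -> row_free A' -> zsub A A' ->
  latdet A' <= latdet A /\ (latdet A' = latdet A -> zsub A' A).
Proof.
move=> A_free A'_free /zsubP[T eA].
have detT_neq0 : \det T != 0.
  have : imx T \in unitmx.
    rewrite -row_free_unit -row_leq_rank; move: A_free; rewrite -row_leq_rank eA.
    by move/leq_trans; apply; apply: mxrankM_maxl.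
  by rewrite unitmxE det_map_mx unitfE intr_eq0.
have detT2_ge1 : 1 <= (\det T ^+ 2)%:~R :> R.
  by rewrite ler1z expr2; move: detT_neq0; clear; lia.
have A'_gt0 : 0 < latdet A' by apply: gram_det_gt0.
rewrite eA latdet_mull det_map_mx -rmorphXn /=; split.
  by rewrite -[X in X <= _]mul1r ler_wpM2r // ltW.
move=> det_eq; have /eqP : \det T ^+ 2 = 1.
  apply: (@intr_inj R); apply: (mulIf (lt0r_neq0 A'_gt0)).
  by rewrite rmorph1 mul1r -det_eq.
rewrite sqrf_eq1 => /orP detT_pm1.
have T_unit : T \in unitmx by rewrite unitmxE unitrE; case: detT_pm1 => /eqP->.
by apply/zsubP; exists (invmx T); rewrite mulmxA -map_mxM mulVmx // map_mx1 mul1mx.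
Qed.

Lemma sublattice_sum n k (B : 'M[R]_n) (A1 A2 : 'M[R]_(k, n)) :
  B \in unitmx -> sublattice B A1 -> sublattice B A2 -> (A2 <= A1)%MS ->
  exists A : 'M[R]_(k, n), [/\ sublattice B A, zsub A1 A, zsub A2 A &
     forall p (Y : 'M[R]_(p, n)), zsub A1 Y -> zsub A2 Y -> zsub A Y].
Proof.
move=> B_unit [A1_free /zsubP[N1 eA1]] [_ /zsubP[N2 eA2]] A21.
have B_free : row_free B by rewrite row_free_unit.
have rankN : \rank (imx (col_mx N1 N2)) = k.
  rewrite -(mxrankMfree _ B_free) map_col_mx mul_col_mx -eA1 -eA2 -addsmxE.
  by rewrite (addsmx_idPl A21); apply/eqP.
have [P P_unit [U eN U_free]] := int_mx_col_basis rankN.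
pose L := usubmx (invmx P).
have eU : U = lsubmx L *m N1 + rsubmx L *m N2.
  rewrite -mul_row_col hsubmxK /L mul_usub_mx eN mulKmx //.
  by rewrite col_mxKu.
have [eN1 eN2] : N1 = usubmx (lsubmx P) *m U /\ N2 = dsubmx (lsubmx P) *m U.
  apply/eq_col_mx; rewrite -mul_col_mx vsubmxK eN -{1}[P]hsubmxK mul_row_col.
  by rewrite mulmx0 addr0.
exists (imx U *m B); split.
- split; first by rewrite /row_free mxrankMfree.
  by apply/zsubP; exists U.
- by apply/zsubP; exists (usubmx (lsubmx P)); rewrite eA1 eN1 map_mxM mulmxA.
- by apply/zsubP; exists (dsubmx (lsubmx P)); rewrite eA2 eN2 map_mxM mulmxA.
move=> p Y /zsubP[S1 eS1] /zsubP[S2 eS2]; apply/zsubP.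
exists (lsubmx L *m S1 + rsubmx L *m S2).
by rewrite eU !map_mxD !map_mxM !mulmxDl -!mulmxA -eA1 -eA2 eS1 eS2 !mulmxA.
Qed.

End IntegralLattices.

Lemma ler_prod_eq (R : realFieldType) (I : finType) (a b : I -> R) :
  (forall i, 0 < a i) -> (forall i, a i <= b i) -> \prod_i b i <= \prod_i a i ->
  forall i, a i = b i.
Proof.
move=> a_gt0 a_le_b prod_le j; apply/eqP; rewrite eq_le a_le_b /=.
apply: contraTT prod_le; rewrite -!ltNge => aj_lt_bj.
rewrite (bigD1 j) //= [X in _ < X](bigD1 j) //=.
apply: le_lt_trans (_ : a j * \prod_(i | i != j) b i < _).
  apply: ler_wpM2l; first exact: ltW.
  by apply: ler_prod => i _; rewrite a_le_b (ltW (a_gt0 i)).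
have prod_gt0 : 0 < \prod_(i | i != j) b i.
  by apply: prodr_gt0 => i _; exact: lt_le_trans (a_gt0 i) (a_le_b i).
by rewrite ltr_pM2r.
Qed.

Section MinimalChains.
Variables (R : realFieldType) (n : nat) (B : 'M[R]_n) (lc : seq nat).
Implicit Types C D : chain R n lc.

Lemma minimal_chain_saturated C D : minimal_chain B C -> is_chain B D ->
  (forall i, zsub (C i) (D i)) -> forall i, zsub (D i) (C i).
Proof.
move=> [[C_sub _] C_min] D_chain CD i.
have C_free l : row_free (C l) by case: (C_sub l).
have D_free l : row_free (D l) by case: D_chain => D_sub _; case: (D_sub l).
have latdet_D_gt0 l : 0 < latdet (D l) by apply: gram_det_gt0.
have latdet_le l := (latdet_zsub (C_free l) (D_free l) (CD l)).1.
have := ler_prod_eq latdet_D_gt0 latdet_le (C_min _ D_chain) i.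
exact: (latdet_zsub (C_free i) (D_free i) (CD i)).2.
Qed.

Lemma minimal_chain_eq C C' : B \in unitmx -> minimal_chain B C -> minimal_chain B C' ->
  (forall i, (C' i <= C i)%MS) -> chain_eq C C'.
Proof.
move=> B_unit C_min C'_min C'C.
have [[C_sub C_nest] _] := C_min; have [[C'_sub C'_nest] _] := C'_min.
have /fin_all_exists[D D_sum] i := sublattice_sum B_unit (C_sub i) (C'_sub i) (C'C i).
have CD i : zsub (C i) (D i) by case: (D_sum i).
have C'D i : zsub (C' i) (D i) by case: (D_sum i).
have D_chain : is_chain B D.
  split=> [i|i j le_ji]; first by case: (D_sum i).
  have [_ _ _ D_least] := D_sum j; apply: D_least.
    exact: zsub_trans (C_nest i j le_ji) (CD i).
  exact: zsub_trans (C'_nest i j le_ji) (C'D i).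
have DC := minimal_chain_saturated C_min D_chain CD.
have DC' := minimal_chain_saturated C'_min D_chain C'D.
by move=> i; split; [apply: zsub_trans (CD i) (DC' i) | apply: zsub_trans (C'D i) (DC i)].
Qed.

End MinimalChains.

Lemma sum_count_ltn h (s : seq nat) : all (fun p => p <= h)%N s ->
  (\sum_(i < h) count (fun p => i < p)%N s)%N = sumn s.
Proof.
elim: s => [|p s IHs] /=; first by rewrite big1.
by case/andP=> p_le_h s_le_h; rewrite big_split /= sum_ord_ltn // IHs.
Qed.

Lemma sumn_conjp lam : is_partition lam -> sumn (conjp lam) = psize lam.
Proof.
case/andP=> lam_sorted _; rewrite /conjp sumnE big_map.
have -> : iota 0 (head 0%N lam) = index_iota 0 (head 0%N lam).
  by rewrite /index_iota subn0.
rewrite big_mkord sum_count_ltn //.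
have geq_trans : transitive geq by move=> q p r /= p_le_q r_le_p; apply: leq_trans r_le_p _.
case: lam lam_sorted => [|p s] //= /(order_path_min geq_trans) s_le_p.
by rewrite leqnn.
Qed.

Lemma conjp_le_head lam k : k \in conjp lam -> (k <= head 0%N (conjp lam))%N.
Proof.
rewrite /conjp; case: (head 0%N lam) => [|h] //=.
rewrite inE => /predU1P[->//|/mapP[i _ ->]].
by apply: sub_count => p /=; apply: leq_ltn_trans.
Qed.

Section FlagsOfChains.
Variables (R : realFieldType) (n m : nat) (lc : seq nat).
Implicit Types (X Y : 'M[R]_(n, m)) (C : chain R n lc).

Lemma flag_of_flag_eq X Y C : flag_of X C -> flag_of Y C -> flag_eq lc X Y.
Proof.
move=> /forallP X_C /forallP Y_C; apply/allP => k /(nthP 0%N)[i i_lt <-].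
move: (X_C (Ordinal i_lt)) (Y_C (Ordinal i_lt)) => /andP[XC CX] /andP[YC CY].
by rewrite (submx_trans XC CY) (submx_trans YC CX).
Qed.

Lemma flag_of_submx X C (C' : chain R n lc) :
  flag_of X C -> flag_of X C' -> forall i, (C' i <= C i)%MS.
Proof.
move=> /forallP X_C /forallP X_C' i.
by move: (X_C i) (X_C' i) => /andP[XC _] /andP[_ C'X]; apply: submx_trans C'X XC.
Qed.

Lemma PiL_flag_of (B : 'M[R]_n) C X :
  is_chain B C -> orthonormal_cols X -> flag_of X C ->
  PiL C = \sum_(i < size lc) flag_proj (nth 0%N lc i) X.
Proof.
move=> [C_sub _] X_orth /forallP X_C; apply: eq_bigr => i _.
by apply: proj_flag_sp X_orth _ (X_C i); case: (C_sub i).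
Qed.

Variables (B : 'M[R]_n) (S : seq (chain R n lc)) (D : seq 'M[R]_(n, m)).
Hypotheses (B_unit : B \in unitmx) (S_min : enum_minimal B S) (D_flags : enum_flags S D).

Lemma enum_flags_uniq : uniq D.
Proof.
have [_ [D_uniq _]] := D_flags; apply/(uniqP 0) => k l k_lt l_lt eq_kl.
by apply: D_uniq => //; rewrite eq_kl; apply/allP => kk _; rewrite submx_refl.
Qed.

Lemma minimal_flags_perm : exists2 F : 'I_(size S) -> 'M[R]_(n, m),
  perm_eq [seq F s | s <- enum 'I_(size S)] D &
  forall (s : 'I_(size S)) C0,
    PiL (nth C0 S s) = \sum_(i < size lc) flag_proj (nth 0%N lc i) (F s).
Proof.
have [S_minimal [_ S_uniq]] := S_min.
have [D_orth [D_uniq [D_S S_D]]] := D_flags.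
pose C0 : chain R n lc := fun=> 0.
have /fin_all_exists[F F_S] (s : 'I_(size S)) :
    exists X, (X \in D) && flag_of X (nth C0 S s).
  by have [X XD X_S] := S_D s (ltn_ord s) C0; exists X; rewrite XD X_S.
have F_D s : F s \in D by case/andP: (F_S s).
have F_of s : flag_of (F s) (nth C0 S s) by case/andP: (F_S s).
have nth_S (s : 'I_(size S)) C1 : nth C1 S s = nth C0 S s by apply: set_nth_default.
exists F; last first.
  move=> s C1; rewrite nth_S.
  by apply: PiL_flag_of (F_of s); [exact: (S_minimal s (ltn_ord s) C0).1 | exact: D_orth].
apply: uniq_perm; last 2 first.
- exact: enum_flags_uniq.
- move=> X; apply/mapP/idP => [[s _ ->] // | XD].
  have [s s_lt X_S] := D_S X XD; exists (Ordinal s_lt); rewrite ?mem_enum //.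
  have FD := F_D (Ordinal s_lt); rewrite -(nth_index 0 XD) -(nth_index 0 FD).
  congr nth; apply: D_uniq; rewrite ?index_mem ?nth_index //.
  by apply: (flag_of_flag_eq (X_S C0)); apply: F_of.
rewrite map_inj_uniq ?enum_uniq // => s s' eqF.
apply/val_inj/(S_uniq _ _ (ltn_ord s) (ltn_ord s') C0).
apply: minimal_chain_eq B_unit (S_minimal _ _ C0) (S_minimal _ _ C0) _ => //.
by apply: flag_of_submx (F_of s) _; rewrite eqF.
Qed.

End FlagsOfChains.

Theorem mainTheorem5 (R : realFieldType) (n : nat) (lam : seq nat)
  (B : 'M[R]_n)
  (S : seq (chain R n (conjp lam)))
  (D : seq 'M[R]_(n, head 0%N (conjp lam))) :
  is_partition lam ->
  all (fun k => k < n)%N (conjp lam) ->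
  B \in unitmx ->
  enum_minimal B S ->
  enum_flags S D ->
  vexillar_2design (conjp lam) D ->
  \sum_(C <- S) PiL C = ((psize lam * size S)%:R / n%:R) *: (1%:M : 'M[R]_n).
Proof.
move=> lam_part _ B_unit S_min D_flags D_design.
have [n0|n_gt0] := posnP n.
  by apply/matrixP => -[i i_lt]; exfalso; rewrite n0 in i_lt.
have [F F_perm PiL_F] := minimal_flags_perm B_unit S_min D_flags.
have sizeSD : size S = size D by rewrite -(perm_size F_perm) size_map size_enum_ord.
have [D_orth _] := D_flags.
pose C0 : chain R n (conjp lam) := fun=> 0.
pose G (X : 'M[R]_(n, head 0%N (conjp lam))) :=
  \sum_(i < size (conjp lam)) flag_proj (nth 0%N (conjp lam) i) X.
have -> : \sum_(C <- S) PiL C = \sum_(X <- D) G X.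
  rewrite (big_nth C0) big_mkord (eq_bigr _ (fun s _ => PiL_F s C0)).
  by rewrite -(perm_big _ F_perm) big_map big_enum.
rewrite /G exchange_big /= (eq_bigr _ (fun i _ => design_sum_flag_proj n_gt0 D_design
  (mem_nth _ (ltn_ord i)) (conjp_le_head (mem_nth _ (ltn_ord i))) D_orth)).
rewrite -scaler_suml -mulr_suml -natr_sum -big_distrl /= sizeSD.
by rewrite -(sumn_conjp lam_part) sumnE (big_nth 0%N) big_mkord.
Qed.
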